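(* Let $P$ be a finite propositional normal logic program, and let $B$ be the operator on subsets of $\mathit{At}(P)$ defined in the context. Then: (1) $B$ is monotone: $F_1\subseteq F_2\subseteq \mathit{At}(P)$ implies $B(F_1)\subseteq B(F_2)$. (2) For every $F\subseteq \mathit{At}(P)$, $A(F)\subseteq B(F)$. (3) For every $F\subseteq F_{wfs}$, $B(F)\subseteq F_{wfs}$. (4) The least fixpoint of $B$ equals $F_{wfs}$. (5) For every $F\subseteq \mathit{At}(P)$, $B(F)=F\cup\big(\overline{F}\setminus LM(P_{F,T}^h)\big)$, where $T=GL(\overline{F})$.
   Context: $P$ is a finite propositional normal logic program (rules $a\leftarrow b_1,\dots,b_m,\mathbf{not}(c_1),\dots,\mathbf{not}(c_n)$). $\mathit{At}(P)$ is the set of atoms occurring in $P$; for $X\subseteq \mathit{At}(P)$, $\overline{X}=\mathit{At}(P)\setminus X$. For a Horn program $Q$, $LM(Q)$ is its least model. For $M\subseteq\mathit{At}(P)$, $P_M$ is obtained from $P$ by removing all rules whose bodies contain a literal $\mathbf{not}(a)$ with $a\in M$; $P^h$ is obtained from $P$ by deleting all negative literals from all rule bodies; $P_M^h=(P_M)^h$. The Gelfond–Lifschitz operator is $GL(M)=LM(P_M^h)$; it is antimonotone. $T_{wfs}=\mathrm{lfp}(GL\circ GL)$ and $F_{wfs}=\overline{GL(T_{wfs})}$ (the atoms true, resp. false, in the well-founded semantics). $A(M)=\overline{GL(GL(\overline{M}))}$. For $F,T\subseteq \mathit{At}(P)$, $P_{F,T}$ is obtained from $P$ by removing (i) all rules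 whose head is in $F$, (ii) all rules whose body contains a positive occurrence of an atom of $F$, (iii) all rules whose body contains $\mathbf{not}(a)$ with $a\in T$; $P_{F,T}^h=(P_{F,T})^h$. The operator $B$ is $B(F)=\overline{LM(P_{F,T}^h)}$ where $T=GL(\overline{F})$. *)

From mathcomp Require Import all_boot.
Set Implicit Arguments. Unset Strict Implicit. Unset Printing Implicit Defensive.

Section LP.
Variable A : finType.

(* a rule  head <- pos_1,...,pos_m, not(neg_1),...,not(neg_n) *)
Record rule := Rule { head : A; pos : seq A; neg : seq A }.

Definition program := seq rule.

Implicit Types (P Q : program) (M X F T : {set A}).

Definition At P : {set A} :=
  [set a | has (fun r => (head r == a) || (a \in pos r) || (a \in neg r)) P].

Definition compl P X : {set A} := At P :\: X.

(* M is a model of the Horn program Q (negative literals are not considered;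
   LM is only applied to programs of the form _^h, which have none). *)
Definition horn_model Q M : bool :=
  all (fun r => all (fun b => b \in M) (pos r) ==> (head r \in M)) Q.

Definition LM Q : {set A} := \bigcap_(M : {set A} | horn_model Q M) M.

Definition reduct P M : program :=
  [seq r <- P | ~~ has (fun a => a \in M) (neg r)].

Definition hpart P : program := [seq Rule (head r) (pos r) [::] | r <- P].

Definition GL P M : {set A} := LM (hpart (reduct P M)).

Definition Twfs P : {set A} := fixset (fun X => GL P (GL P X)).
Definition Fwfs P : {set A} := compl P (GL P (Twfs P)).

Definition Aop P M : {set A} := compl P (GL P (GL P (compl P M))).

Definition PFT P F T : program :=
  [seq r <- P | [&& head r \notin F,
                    ~~ has (fun a => a \in F) (pos r) &
                    ~~ has (fun a => a \in T) (neg r)]].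

Definition Bop P F : {set A} :=
  compl P (LM (hpart (PFT P F (GL P (compl P F))))).

End LP.

From mathcomp Require Import all_boot.
Set Implicit Arguments.

(* Each P_{F,T} is a subprogram of the reduct P_T, so LM(P_{F,T}^h) is contained
   in GL(T); this gives (2), and (1) because the rules kept in P_{F,T} only
   decrease as F grows.  When F is disjoint from GL(T), every rule of P_T that
   fires in GL(T) survives in P_{F,T}, so LM(P_{F,T}^h) = GL(T).  For F = F_wfs,
   whose complement U = GL(T_wfs) satisfies GL(U) = T_wfs, this makes F_wfs a
   fixpoint of B, and (3) follows by monotonicity.  Conversely, the complement W
   of a fixpoint satisfies W ⊆ GL(GL(W)), so GL(W) is a prefixpoint of GL∘GL and
   contains T_wfs; hence W ⊆ GL(T_wfs), that is F_wfs ⊆ F. *)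

Lemma fixset_sub_prefixpoint (T : finType) (f : {set T} -> {set T}) X :
  {homo f : Y Z / Y \subset Z} -> f X \subset X -> fixset f \subset X.
Proof.
move=> f_mono fX; rewrite /fixset; elim: #|T| => [|k IHk] /=; first exact: sub0set.
exact: subset_trans (f_mono _ _ IHk) fX.
Qed.

Section LeastModel.
Variable A : finType.
Implicit Types (Q : program A) (M : {set A}) (p q : pred (rule A)).

Lemma LM_min Q M : horn_model Q M -> LM Q \subset M.
Proof. by move=> QM; apply/subsetP => x /bigcapP; apply. Qed.

Lemma LM_model Q : horn_model Q (LM Q).
Proof.
suff LM_model_sub Q' : (forall M, horn_model Q M -> horn_model Q' M) ->
    horn_model Q' (LM Q) by exact: LM_model_sub.
elim: Q' => [|r Q' IHQ'] //= QQ'; apply/andP; split; last first.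
  by apply: IHQ' => M /QQ' /andP[].
apply/implyP => posr; apply/bigcapP => M QM.
have /andP[/implyP -> //] := QQ' M QM.
by apply: sub_all posr => x /bigcapP; apply.
Qed.

Lemma horn_model_hpart_filter p Q M :
  horn_model (hpart (filter p Q)) M =
  all (fun r => p r ==> all (fun b => b \in M) (pos r) ==> (head r \in M)) Q.
Proof. by rewrite /horn_model /hpart all_map all_filter. Qed.

Lemma LM_hpart_filterS p q Q : subpred p q ->
  LM (hpart (filter p Q)) \subset LM (hpart (filter q Q)).
Proof.
move=> pq; apply/subsetP => x /bigcapP LMx; apply/bigcapP => M qM; apply: LMx.
move: qM; rewrite !horn_model_hpart_filter; apply: sub_all => r /=.
by case: (p r) (pq r) => // ->.
Qed.

Lemma all_head_At Q : all (fun r => head r \in At Q) Q.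
Proof.
elim: Q => //= r Q IHQ; rewrite inE /= eqxx /=.
by apply: sub_all IHQ => r' /=; rewrite !inE /= => ->; rewrite orbT.
Qed.

Lemma LM_hpart_filter_At p Q : LM (hpart (filter p Q)) \subset At Q.
Proof.
apply: LM_min; rewrite horn_model_hpart_filter.
by apply: sub_all (all_head_At Q) => r /= ->; rewrite !implybT.
Qed.

End LeastModel.

Section Operators.
Variables (A : finType) (P : program A).
Implicit Types (M X F T W L : {set A}).

Lemma GL_At M : GL P M \subset At P.
Proof. exact: LM_hpart_filter_At. Qed.

Lemma GL_anti M1 M2 : M1 \subset M2 -> GL P M2 \subset GL P M1.
Proof.
move=> M12; apply: LM_hpart_filterS => r; apply: contra.
by apply: sub_has => x /=; apply: (subsetP M12).
Qed.

Lemma GLGL_mono : {homo (fun X => GL P (GL P X)) : X Y / X \subset Y}.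
Proof. by move=> X Y XY; apply/GL_anti/GL_anti. Qed.

Lemma complK X : X \subset At P -> compl P (compl P X) = X.
Proof. by move=> XAt; rewrite /compl setDDr setDv set0U; apply/setIidPr. Qed.

Lemma LM_PFT_GL F T : LM (hpart (PFT P F T)) \subset GL P T.
Proof. by apply: LM_hpart_filterS => r /and3P[]. Qed.

Lemma LM_PFT_disjoint F T : LM (hpart (PFT P F T)) \subset ~: F.
Proof.
apply: LM_min; rewrite horn_model_hpart_filter; apply: sub_all (all_predT P) => r _.
by apply/implyP => /and3P[headF _ _]; rewrite in_setC headF implybT.
Qed.

Lemma LM_PFT_eq_GL F T :
  [disjoint F & GL P T] -> LM (hpart (PFT P F T)) = GL P T.
Proof.
rewrite disjoint_sym disjoints_subset => GLF.
apply/eqP; rewrite eqEsubset LM_PFT_GL /=.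
set L := LM _; apply: LM_min; rewrite horn_model_hpart_filter.
have := LM_model (hpart (PFT P F T)); rewrite -/L horn_model_hpart_filter => Lmodel.
have := LM_model (hpart (reduct P T)); rewrite horn_model_hpart_filter => GLmodel.
move: (conj Lmodel GLmodel) => /andP; rewrite -all_predI.
apply: sub_all => r /andP[Lr GLr]; apply/implyP => negr; apply/implyP => posL.
have posG : all (fun b => b \in GL P T) (pos r).
  by apply: sub_all posL => x; apply: (subsetP (LM_PFT_GL F T)).
have headG : head r \in GL P T by move: GLr; rewrite negr posG.
move: Lr => /implyP; rewrite posL implyTb; apply; apply/and3P; split=> //.
- by rewrite -in_setC (subsetP GLF).
- by rewrite -all_predC; apply: sub_all posG => x /= /(subsetP GLF); rewrite in_setC.
Qed.

Lemma Bop_mono F1 F2 : F1 \subset F2 -> Bop P F1 \subset Bop P F2.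
Proof.
move=> F12; apply: setDS; apply: LM_hpart_filterS => r /and3P[headF posF negT].
apply/and3P; split.
- by apply: contra headF; apply: (subsetP F12).
- by apply: contra posF; apply: sub_has => x /=; apply: (subsetP F12).
- by apply: contra negT; apply: sub_has => x /=; apply/(subsetP (GL_anti _)) /setDS.
Qed.

Lemma Aop_sub_Bop F : Aop P F \subset Bop P F.
Proof. exact/setDS/LM_PFT_GL. Qed.

Lemma compl_disjointE F L : F \subset At P -> L \subset ~: F ->
  compl P L = F :|: (compl P F :\: L).
Proof.
move=> FAt LF; apply/setP => x; rewrite /compl in_setU !in_setD.
case xF: (x \in F) => //=; rewrite (subsetP FAt) // andbT.
by apply/negP => /(subsetP LF); rewrite in_setC xF.
Qed.

Lemma Bop_Fwfs : Bop P (Fwfs P) = Fwfs P.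
Proof.
have TwfsK : GL P (GL P (Twfs P)) = Twfs P := fixsetK GLGL_mono.
set U := GL P (Twfs P); have -> : Fwfs P = compl P U by [].
rewrite /Bop complK ?GL_At // TwfsK LM_PFT_eq_GL //.
by rewrite disjoints_subset /compl setDE subsetIr.
Qed.

Lemma Twfs_sub_GL W : W \subset GL P (GL P W) -> Twfs P \subset GL P W.
Proof.
by move=> WGGW; apply: fixset_sub_prefixpoint; [apply: GLGL_mono | apply: GL_anti].
Qed.

Lemma Fwfs_sub_Bop_fixpoint F : F \subset At P -> Bop P F = F -> Fwfs P \subset F.
Proof.
move=> FAt BF; set W := compl P F.
have WE : W = LM (hpart (PFT P F (GL P W))).
  by rewrite /W -[in LHS]BF /Bop complK // LM_hpart_filter_At.
have WGGW : W \subset GL P (GL P W) by rewrite {1}WE LM_PFT_GL.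
rewrite -(complK FAt); apply: setDS.
exact: subset_trans WGGW (GL_anti (Twfs_sub_GL WGGW)).
Qed.

End Operators.

Theorem theorem1 (A : finType) (P : program A) :
  (forall F1 F2 : {set A}, F1 \subset F2 -> F2 \subset At P ->
     Bop P F1 \subset Bop P F2) /\
  (forall F : {set A}, F \subset At P -> Aop P F \subset Bop P F) /\
  (forall F : {set A}, F \subset Fwfs P -> Bop P F \subset Fwfs P) /\
  (Bop P (Fwfs P) = Fwfs P /\
   forall F : {set A}, F \subset At P -> Bop P F = F -> Fwfs P \subset F) /\
  (forall F : {set A}, F \subset At P ->
     Bop P F = F :|: (compl P F :\: LM (hpart (PFT P F (GL P (compl P F)))))).
Proof.
split; first by move=> F1 F2 F12 _; apply: Bop_mono.
split; first by move=> F _; apply: Aop_sub_Bop.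
split; first by move=> F FFwfs; rewrite -Bop_Fwfs; apply: Bop_mono.
split; first by split; [exact: Bop_Fwfs | exact: Fwfs_sub_Bop_fixpoint].
by move=> F FAt; rewrite /Bop (compl_disjointE FAt) // LM_PFT_disjoint.
Qed.
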